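(* Let $(M,\le)$ be a finite modular lattice and let $Q$ be a set of covering relations of $M$. Then $Q$ is the set of covering relations (of $M$) contained in some saturated transfer system on $M$ if and only if $Q$ is a saturated cover. Moreover, the assignments $Q\mapsto\langle Q\rangle$ and $R\mapsto R_{cov}$ are mutually inverse bijections between saturated covers on $M$ and saturated transfer systems on $M$, where $R_{cov}$ is the set of covering relations of $M$ lying in $R$.
   Context: A lattice $M$ is modular if $a\le b$ implies $a\vee(x\wedge b)=(a\vee x)\wedge b$ for all $a,b,x$. A transfer system on a finite lattice $(P,\le)$ is a partial order $R$ refining $\le$ closed under restriction: $x\,R\,z$ and $y\le z$ imply $(x\wedge y)\,R\,y$. It is saturated if $x\,R\,y$, $y\le z$ and $x\,R\,z$ imply $y\,R\,z$. For a set $Q$ of pairs $(x,y)$ with $x\le y$, $\langle Q\rangle$ is the intersection of all transfer systems containing $Q$. A covering diamond is a quadruple $x,y,x\wedge y,x\vee y$ with $x\ne y$ such that $x\vee y$ covers both $x$ and $y$ and both $x,y$ cover $x\wedge y$. A saturated cover on $M$ is a set $Q$ of covering relations of $M$ such that (1) for all $x,y\in M$, if $x\,Q\,(x\vee y)$ then $(x\wedge y)\,Q\,y$; and (2) for every covering diamond, if three of its four covering relations ($x\wedge y\lessdot x$, $x\wedge y\lessdot y$, $x\lessdot x\vee y$, $y\lessdot x\vee y$) lie in $Q$, then so does the fourth. *)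

From HB Require Import structures.
From mathcomp Require Import all_boot all_order.
Set Implicit Arguments. Unset Strict Implicit. Unset Printing Implicit Defensive.
Import Order.TTheory.
Local Open Scope order_scope.

Section Defs.
Context {disp : Order.disp_t} {M : finLatticeType disp}.

Definition modular_lattice : Prop :=
  forall a b x : M, a <= b -> a `|` (x `&` b) = (a `|` x) `&` b.

Definition covers (x y : M) : Prop :=
  x < y /\ (forall z : M, x < z -> z < y -> False).

Definition transfer_system (R : M -> M -> Prop) : Prop :=
  [/\ (forall x, R x x),
      (forall x y, R x y -> R y x -> x = y),
      (forall x y z, R x y -> R y z -> R x z),
      (forall x y, R x y -> x <= y)
    & (forall x y z, R x z -> y <= z -> R (x `&` y) y)].

Definition saturated (R : M -> M -> Prop) : Prop :=
  forall x y z, R x y -> y <= z -> R x z -> R y z.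

Definition saturated_transfer_system (R : M -> M -> Prop) : Prop :=
  transfer_system R /\ saturated R.

Definition gen_ts (Q : M -> M -> Prop) : M -> M -> Prop :=
  fun x y => forall R, transfer_system R -> (forall a b, Q a b -> R a b) -> R x y.

Definition cov_part (R : M -> M -> Prop) : M -> M -> Prop :=
  fun x y => covers x y /\ R x y.

Definition set_of_covers (Q : M -> M -> Prop) : Prop :=
  forall x y, Q x y -> covers x y.

Definition covering_diamond (x y : M) : Prop :=
  [/\ x <> y, covers x (x `|` y), covers y (x `|` y),
      covers (x `&` y) x & covers (x `&` y) y].

Definition saturated_cover (Q : M -> M -> Prop) : Prop :=
  [/\ set_of_covers Q,
      (forall x y, Q x (x `|` y) -> Q (x `&` y) y)
    & (forall x y, covering_diamond x y ->
        let a := Q (x `&` y) x in let b := Q (x `&` y) y in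
        let c := Q x (x `|` y) in let d := Q y (x `|` y) in
        [/\ (a /\ b /\ c -> d), (a /\ b /\ d -> c),
            (a /\ c /\ d -> b) & (b /\ c /\ d -> a)])].
End Defs.

(* A saturated transfer system is determined by its covering relations: in a saturated
   transfer system R, x R z holds iff every covering relation a <. b with x <= a, b <= z
   lies in R (restrict to the top of the cover, then saturate), and since M is finite such
   an interval is traversed by a maximal chain of covers.  Conversely, given a saturated
   cover Q, condition (1) makes the reflexive-transitive closure of Q closed under
   restriction, so it is <Q>.  To see that it is saturated, one shows by induction on a
   Q-chain from x to z that every cover a <. b inside [x, z] lies in Q: if the last step
   y <. z of the chain lies above b we conclude by induction; otherwise modularity turns
   a <. b and the meets with y into a covering diamond with vertices a /\ y, a, b /\ y, b,
   three of whose edges are in Q. *)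
From mathcomp Require Import all_boot all_order.
From Stdlib Require Import Relation_Operators Operators_Properties.
From Stdlib Require Import FunctionalExtensionality PropExtensionality.
Set Implicit Arguments. Unset Strict Implicit. Unset Printing Implicit Defensive.
Import Order.TTheory.
#[local] Arguments rt_step {A R x y}.
#[local] Arguments rt_refl {A R x}.
#[local] Arguments rt_trans {A R x y z}.
Local Open Scope order_scope.

Section Development.
Context {disp : Order.disp_t} {M : finLatticeType disp}.
Implicit Types (a b c w x y z : M) (Q R : M -> M -> Prop).

Lemma covers_lt a b : covers a b -> a < b.
Proof. by case. Qed.

Lemma covers_between a b w : covers a b -> a <= w -> w <= b -> w = a \/ w = b.
Proof.
move=> [_ no_mid]; rewrite le_eqVlt => /predU1P [-> _|aw]; first by left.
rewrite le_eqVlt => /predU1P [->|wb]; first by right.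
by case: (no_mid w aw wb).
Qed.

Lemma covers_join y z c : covers y z -> c <= z -> ~~ (c <= y) -> y `|` c = z.
Proof.
move=> Cyz cz ncy.
have yc_le_z : y `|` c <= z by rewrite leUx (ltW (covers_lt Cyz)) cz.
have [E|//] := covers_between Cyz (leUl y c) yc_le_z.
by move: ncy; rewrite -E leUr.
Qed.

Section Modular.
Hypothesis M_modular : modular_lattice (M := M).

(* The interval [c /\ y, c] is a transpose of [y, y \/ c] = [y, z]. *)
Lemma covers_meet y z c : covers y z -> c <= z -> ~~ (c <= y) -> covers (c `&` y) c.
Proof.
move=> Cyz cz ncy; split.
  rewrite lt_neqAle leIl andbT; apply: contraNneq ncy => <-; exact: leIr.
move=> w lw wc.
have Ew := M_modular y (ltW wc); rewrite meetC (join_l (ltW lw)) in Ew.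
have wy_le_z : w `|` y <= z by rewrite leUx (le_trans (ltW wc) cz) (ltW (covers_lt Cyz)).
have [Eyw|Eyw] := covers_between Cyz (leUr y w) wy_le_z.
  have wy : w <= y by rewrite -Eyw leUl.
  have : w <= c `&` y by rewrite lexI (ltW wc) wy.
  by move/(lt_le_trans lw); rewrite ltxx.
by move: wc; rewrite Ew Eyw (meet_r cz) ltxx.
Qed.

Lemma covering_diamond_meet y z a b :
  covers y z -> covers a b -> b <= z -> ~~ (a <= y) ->
  [/\ covering_diamond a (b `&` y), a `&` (b `&` y) = a `&` y & a `|` (b `&` y) = b].
Proof.
move=> Cyz Cab bz nay.
have ab := ltW (covers_lt Cab).
have az := le_trans ab bz.
have nby : ~~ (b <= y) by apply: contra nay => /(le_trans ab).
have Emeet : a `&` (b `&` y) = a `&` y by rewrite meetA (meet_l ab).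
have Ejoin : a `|` (b `&` y) = b.
  by rewrite meetC (M_modular y ab) joinC (covers_join Cyz az nay) (meet_r bz).
have nba : ~~ (b `&` y <= a).
  by apply: contraTN (covers_lt Cab) => /join_l; rewrite Ejoin => ->; rewrite ltxx.
split=> //; rewrite /covering_diamond Emeet Ejoin; split.
- by move=> E; move: nay; rewrite E leIr.
- exact: Cab.
- exact: covers_meet Cyz bz nby.
- exact: covers_meet Cyz az nay.
- by rewrite -Emeet meetC; apply: covers_meet Cab (leIl b y) nba.
Qed.
End Modular.

Lemma card_below_lt w z : w < z -> (#|[set u | (u < w)%O]| < #|[set u | (u < z)%O]|)%N.
Proof.
move=> wz; apply: proper_card; apply/properP; split.
  by apply/subsetP => u; rewrite !inE => /lt_trans; apply.
by exists w; rewrite !inE ?ltxx.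
Qed.

Lemma lt_ind (P : M -> Prop) :
  (forall z, (forall w, w < z -> P w) -> P z) -> forall z, P z.
Proof.
move=> IH z; have [n] := ubnP #|[set u | u < z]|.
elim: n z => // n IHn z; rewrite ltnS => Hz; apply: IH => w wz.
exact: IHn (leq_trans (card_below_lt wz) Hz).
Qed.

Lemma exists_covers_below x z : x < z -> exists2 w, x <= w & covers w z.
Proof.
move=> xz; have Px : (x <= x) && (x < z) by rewrite lexx xz.
case: (@arg_maxnP _ x (fun w => (x <= w) && (w < z)) (fun w => #|[set u | u < w]|) Px).
move=> w /andP [xw wz] w_max.
exists w => //; split=> // u wu uz.
have := w_max u; rewrite (le_trans xw (ltW wu)) uz => /(_ isT).
by apply/negP; rewrite /= -ltnNge card_below_lt.
Qed.

Definition interval_covers_in Q x z : Prop :=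
  forall a b, x <= a -> b <= z -> covers a b -> Q a b.

Section Closure.
Variable Q : M -> M -> Prop.
Local Notation clos := (clos_refl_trans M Q).

Lemma clos_of_interval_covers x z : x <= z -> interval_covers_in Q x z -> clos x z.
Proof.
elim/lt_ind: z => z IH; rewrite le_eqVlt => /predU1P [<- _|xz Qxz].
  exact: rt_refl.
have [w xw Cwz] := exists_covers_below xz.
apply: rt_trans (IH w (covers_lt Cwz) xw _) (rt_step (Qxz _ _ xw (lexx z) Cwz)).
by move=> a b xa bw; apply: Qxz xa (le_trans bw (ltW (covers_lt Cwz))).
Qed.

Section RestrictionClosed.
Hypothesis Q_cov : set_of_covers Q.
Hypothesis Q_res : forall x y, Q x (x `|` y) -> Q (x `&` y) y.

Lemma clos_le x y : clos x y -> x <= y.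
Proof.
elim=> [a b /Q_cov/covers_lt/ltW //|//|a b c _ ab _ bc].
exact: le_trans ab bc.
Qed.

Lemma Q_restrict w z y : Q w z -> y <= z -> ~~ (y <= w) -> Q (w `&` y) y.
Proof. by move=> Qwz yz nyw; apply: Q_res; rewrite (covers_join (Q_cov Qwz) yz nyw). Qed.

Lemma clos_restrict x y z : clos x z -> y <= z -> clos (x `&` y) y.
Proof.
move=> Hxz; elim: Hxz y => {x z} [a b Qab|a|a b c Hab IHab _ IHbc] y.
- move=> yb; have [ya|nya] := boolP (y <= a); first by rewrite (meet_r ya); apply: rt_refl.
  exact/rt_step/(Q_restrict Qab yb nya).
- by move=> ya; rewrite (meet_r ya); apply: rt_refl.
- move=> yc; have := IHab _ (leIl b y); rewrite meetA (meet_l (clos_le Hab)) => Hay.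
  exact: rt_trans Hay (IHbc y yc).
Qed.

Lemma clos_transfer_system : transfer_system clos.
Proof.
split.
- by move=> x; apply: rt_refl.
- by move=> x y /clos_le xy /clos_le yx; apply: le_anti; rewrite xy yx.
- by move=> x y z; apply: rt_trans.
- exact: clos_le.
- by move=> x y z Hxz; apply: clos_restrict.
Qed.

Lemma gen_tsE x y : gen_ts Q x y <-> clos x y.
Proof.
split; first by apply; [exact: clos_transfer_system | move=> a b; apply: rt_step].
elim=> [a b Qab|a|a b c _ IHab _ IHbc] R HR QR; case: (HR) => Rrefl _ Rtrans _ _.
- exact: QR.
- exact: Rrefl.
- exact: Rtrans (IHab R HR QR) (IHbc R HR QR).
Qed.

Section Diamond.
Hypothesis M_modular : modular_lattice (M := M).
Hypothesis Q_sat : saturated_cover Q.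

Lemma interval_covers_in_clos x z : clos x z -> interval_covers_in Q x z.
Proof.
move=> Hxz; elim/clos_refl_trans_ind_left: z / Hxz.
  move=> a b xa bx Cab.
  by have := lt_le_trans (le_lt_trans xa (covers_lt Cab)) bx; rewrite ltxx.
move=> y z Hxy IH Qyz a b xa bz Cab.
have [by_|nby] := boolP (b <= y); first exact: IH xa by_ Cab.
have Qb : Q (b `&` y) b by rewrite meetC; apply: Q_restrict Qyz bz nby.
have [ay|nay] := boolP (a <= y).
  have : a <= b `&` y by rewrite lexI ay (ltW (covers_lt Cab)).
  case/(covers_between Cab)/(_ (leIl b y)) => [<- //|Eb].
  by move: nby; rewrite -Eb leIr.
have az := le_trans (ltW (covers_lt Cab)) bz.
have Qa : Q (a `&` y) a by rewrite meetC; apply: Q_restrict Qyz az nay.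
have [D Emeet Ejoin] := covering_diamond_meet M_modular (Q_cov Qyz) Cab bz nay.
have xay : x <= a `&` y by rewrite lexI xa (clos_le Hxy).
have Cmid : covers (a `&` y) (b `&` y) by case: D; rewrite Emeet.
have Qmid := IH _ _ xay (leIr y b) Cmid.
have [_ _ Q_diamond] := Q_sat.
have [_ Qtop _ _] := Q_diamond _ _ D.
by move: Qtop; rewrite Emeet Ejoin; apply.
Qed.

Lemma clos_saturated : saturated clos.
Proof.
move=> x y z Hxy yz Hxz; apply: clos_of_interval_covers yz _ => a b ya bz.
exact: interval_covers_in_clos Hxz _ _ (le_trans (clos_le Hxy) ya) bz.
Qed.
End Diamond.
End RestrictionClosed.
End Closure.

Section SaturatedTransferSystem.
Variable R : M -> M -> Prop.
Hypothesis R_sts : saturated_transfer_system R.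

Lemma sts_restrict_up x y b : R x y -> x <= b -> b <= y -> R x b.
Proof.
case: R_sts => -[_ _ _ _ Rres] _ Rxy xb by_.
by have := Rres _ _ _ Rxy by_; rewrite (meet_l xb).
Qed.

Lemma sts_interval x z a b : R x z -> x <= a -> a <= b -> b <= z -> R a b.
Proof.
case: R_sts => _ Rsat Rxz xa ab bz.
have Rxb := sts_restrict_up Rxz (le_trans xa ab) bz.
exact: (Rsat _ _ _ (sts_restrict_up Rxz xa (le_trans ab bz)) ab Rxb).
Qed.

Hypothesis M_modular : modular_lattice (M := M).

Lemma cov_part_saturated_cover : saturated_cover (cov_part R).
Proof.
case: R_sts => -[_ _ Rtrans _ Rres] Rsat; split.
- by move=> x y [].
- move=> x y [Cx Rx]; split; last exact: Rres Rx (leUr y x).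
  have nyx : ~~ (y <= x).
    by apply: contraTN (covers_lt Cx) => /join_l ->; rewrite ltxx.
  by rewrite meetC; apply: (covers_meet M_modular Cx (leUr y x) nyx).
move=> x y [_ Cx Cy Cmx Cmy] /=; split=> -[[_ Rmx] [[_ Rm] [_ R1]]]; split=> //.
- exact: (Rsat _ _ _ Rm (leUr y x) (Rtrans _ _ _ Rmx R1)).
- exact: (Rsat _ _ _ Rmx (leUl x y) (Rtrans _ _ _ Rm R1)).
- by have := Rres _ _ _ (Rtrans _ _ _ Rmx Rm) (leUr y x); rewrite -meetA meetxx.
- by have := Rres _ _ _ (Rtrans _ _ _ Rmx R1) (leUl x y); rewrite meetAC meetxx.
Qed.

Lemma gen_ts_cov_part x y : gen_ts (cov_part R) x y <-> R x y.
Proof.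
have [[Rrefl _ Rtrans Rle _] _] := R_sts.
have [Qcov Qres _] := cov_part_saturated_cover.
rewrite (gen_tsE Qcov Qres); split.
  by elim=> [a b []|//|a b c _ Rab _ Rbc]; last exact: Rtrans Rab Rbc.
move=> Rxy; apply: clos_of_interval_covers (Rle _ _ Rxy) _ => a b xa by_ Cab.
by split=> //; apply: sts_interval Rxy xa (ltW (covers_lt Cab)) by_.
Qed.
End SaturatedTransferSystem.

Lemma saturated_cover_gen_ts Q : modular_lattice (M := M) -> saturated_cover Q ->
  saturated_transfer_system (gen_ts Q) /\ (forall x y, cov_part (gen_ts Q) x y <-> Q x y).
Proof.
move=> M_modular Q_sat; have [Qcov Qres _] := Q_sat.
have -> : gen_ts Q = clos_refl_trans M Q.
  by do 2!apply: functional_extensionality => ?; apply/propositional_extensionality/gen_tsE.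
split; first by split; [exact: clos_transfer_system | exact: clos_saturated].
move=> x y; split.
  by case=> Cxy /(interval_covers_in_clos Qcov Qres M_modular Q_sat); apply.
by move=> Qxy; split; [exact: Qcov | exact: rt_step].
Qed.
End Development.

Theorem theorem3p13 (disp : Order.disp_t) (M : finLatticeType disp) :
  modular_lattice (M := M) ->
  [/\ (forall Q : M -> M -> Prop, set_of_covers Q ->
         ((exists R : M -> M -> Prop, saturated_transfer_system R /\
             (forall x y, Q x y <-> cov_part R x y))
          <-> saturated_cover Q)),
      (forall Q : M -> M -> Prop, saturated_cover Q ->
         saturated_transfer_system (gen_ts Q) /\
         (forall x y, cov_part (gen_ts Q) x y <-> Q x y))
    & (forall R : M -> M -> Prop, saturated_transfer_system R ->
         saturated_cover (cov_part R) /\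
         (forall x y, gen_ts (cov_part R) x y <-> R x y))].
Proof.
move=> M_modular; split.
- move=> Q _; split.
    move=> [R [R_sts QR]].
    have -> : Q = cov_part R.
      by do 2!apply: functional_extensionality => ?; apply/propositional_extensionality/QR.
    exact: cov_part_saturated_cover.
  move=> Q_sat; have [Q_sts Q_covE] := saturated_cover_gen_ts M_modular Q_sat.
  by exists (gen_ts Q); split=> // x y; apply: iff_sym.
- by move=> Q; apply: saturated_cover_gen_ts.
- by move=> R R_sts; split; [exact: cov_part_saturated_cover | exact: gen_ts_cov_part].
Qed.
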